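(* Splitting forcing $\mathbb{SP}$ is weighted: for every $T\in\mathbb{SP}$ there is a weight $\rho$ on $T$ such that every tree $S$ with $S\le_\rho T$ belongs to $\mathbb{SP}$.
   Context: $S\subseteq 2^{<\omega}$ is fat if there is $m\in\omega$ such that for every $n\ge m$ there are $s,t\in S$ with $s(n)=0,t(n)=1$. For a tree $T\subseteq 2^{<\omega}$ and $s\in T$, $T_s=\{t\in T:t\subseteq s\text{ or }s\subseteq t\}$. $T$ is a splitting tree if $T_s$ is fat for every $s\in T$; $\mathbb{SP}$ is the set of splitting trees ordered by inclusion. A weight on a perfect tree $T$ is a map $\rho:T\times T\to[T]^{<\omega}$ with $\rho(s,t)\subseteq T_s\setminus T_t$ for all $s,t\in T$. For a tree $S$, $S\le_\rho T$ means $S\subseteq T$ and the set of $s_0\in S$ for which there is an injective sequence $(s_n)_{n\in\omega}$ in $S_{s_0}$ (starting at $s_0$) with $\rho(s_n,s_{n+1})\subseteq S$ for all $n$ is dense in $S$ (every node of $S$ has an extension in this set). *)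

(* Nodes of 2^{<omega} are finite bit sequences
   [seq bool]; the digit 0 is [false] and 1 is [true]. Subsets of 2^{<omega}
   are predicates [seq bool -> Prop]. *)
From mathcomp Require Import all_boot.
Set Implicit Arguments. Unset Strict Implicit. Unset Printing Implicit Defensive.

Definition node := seq bool.
Definition nodeset := node -> Prop.

Definition val_at (s : node) (n : nat) (b : bool) : Prop :=
  n < size s /\ nth false s n = b.

Definition fat (S : nodeset) : Prop :=
  exists m : nat, forall n : nat, m <= n ->
    exists s t : node, S s /\ S t /\ val_at s n false /\ val_at t n true.

Definition is_tree (T : nodeset) : Prop :=
  (exists s, T s) /\ (forall s t : node, T t -> prefix s t -> T s).

Definition subtree (T : nodeset) (s : node) : nodeset :=
  fun t => T t /\ (prefix t s \/ prefix s t).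

Definition splitting_tree (T : nodeset) : Prop :=
  is_tree T /\ forall s, T s -> fat (subtree T s).

Definition SP (T : nodeset) : Prop := splitting_tree T.

Definition perfect_tree (T : nodeset) : Prop :=
  is_tree T /\ forall s, T s -> exists t u : node,
    T t /\ T u /\ prefix s t /\ prefix s u /\ ~~ prefix t u /\ ~~ prefix u t.

(* a weight on a perfect tree T: rho(s,t) is a finite subset (given as a list)
   of T_s \ T_t for all s, t in T *)
Definition weight (T : nodeset) (rho : node -> node -> seq node) : Prop :=
  perfect_tree T /\
  forall s t : node, T s -> T t ->
    forall u : node, u \in rho s t -> subtree T s u /\ ~ subtree T t u.

Definition rho_le (rho : node -> node -> seq node) (S T : nodeset) : Prop :=
  (forall s, S s -> T s) /\
  (forall s, S s -> exists s0, S s0 /\ prefix s s0 /\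
     exists f : nat -> node,
       injective f /\ f 0 = s0 /\ (forall n, subtree S s0 (f n)) /\
       (forall n u, u \in rho (f n) (f n.+1) -> S u)).

(** Let [m t] be a fatness threshold of [T_t] and let [rho(s, t)] collect the
    nodes of [T_s \ T_t] of length at most [m t]. Given [S <=_rho T], a node
    [s] of [S] and the injective sequence [s0 = f 0, f 1, ...] in [S_s0]
    provided by [<=_rho], fix a level [n >= max (m s0, |s0|)] and a digit [b].
    [T_(f 0)] contains an extension of [s0] taking the value [b] at [n].
    By injectivity some [f J] is longer than [n]; it either already has the
    digit [b] at [n], or [T_(f J)] contains no such extension. In the second
    case the extension is lost at some step [j -> j+1]: then [f (j+1)] extends
    [s0], fatness of [T_(f (j+1))] forces [n < m (f (j+1))], and truncating
    the extension in [T_(f j)] to length [n+1] gives a node of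
    [rho(f j, f (j+1))], hence of [S]. *)
From mathcomp Require Import all_boot boolp.

Set Implicit Arguments. Unset Strict Implicit. Unset Printing Implicit Defensive.

Section Prefix.
Variable T : eqType.
Implicit Types s u w : seq T.

Lemma prefix_nth x0 s u n : prefix s u -> n < size s -> nth x0 u n = nth x0 s n.
Proof. by move/prefixP=> [w ->] ltn; rewrite nth_cat ltn. Qed.

Lemma prefix_le_prefix s w u :
  prefix s u -> prefix w u -> size s <= size w -> prefix s w.
Proof.
move/prefixP=> [x ->] + le_sw; rewrite !prefixE => /eqP <-.
by rewrite take_takel // take_size_cat.
Qed.

Lemma comparable_prefix s u : prefix u s \/ prefix s u -> size s <= size u -> prefix s u.
Proof.
case=> // us le_su; have /eqP eq_su : size u == size s by rewrite eqn_leq size_prefix.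
by move: us; rewrite prefixE eq_su take_size => /eqP ->; apply: prefix_refl.
Qed.

Lemma comparable_nth x0 u w n : prefix u w \/ prefix w u ->
  n < size u -> n < size w -> nth x0 u n = nth x0 w n.
Proof. by case=> [uw | wu] ltu ltw; rewrite ?(prefix_nth x0 uw) ?(prefix_nth x0 wu). Qed.

End Prefix.

Lemma val_at_comparable_prefix s u n b :
  prefix u s \/ prefix s u -> size s <= n -> val_at u n b -> prefix s u.
Proof. by move=> cmp le_sn [ltn _]; apply: comparable_prefix cmp (leq_trans le_sn (ltnW ltn)). Qed.

Lemma val_at_prefix s u n b : prefix s u -> val_at s n b -> val_at u n b.
Proof. by move=> pre [ltn <-]; split; [apply: leq_trans (size_prefix pre) | apply: prefix_nth]. Qed.

Lemma val_at_take u n b : val_at u n b -> val_at (take n.+1 u) n b /\ size (take n.+1 u) = n.+1.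
Proof. by move=> [ltn <-]; rewrite /val_at size_takel // nth_take. Qed.

Definition short_nodes (B : nat) : seq node :=
  flatten [seq [seq tval t | t : k.-tuple bool] | k <- iota 0 B.+1].

Lemma short_nodesP s B : size s <= B -> s \in short_nodes B.
Proof.
move=> le_sB; apply/flatten_mapP; exists (size s); first by rewrite mem_iota ltnS.
by apply/mapP; exists (in_tuple s); rewrite ?mem_enum.
Qed.

Lemma injective_size_unbounded (f : nat -> node) :
  injective f -> forall n, exists k, n < size (f k).
Proof.
move=> inj_f n; apply: contrapT => /forallNP short.
pose ks := iota 0 (size (short_nodes n)).+1.
have sub : {subset map f ks <= short_nodes n}.
  by move=> _ /mapP[k _ ->]; apply: short_nodesP; rewrite leqNgt; apply/negP.
have := uniq_leq_size _ sub; rewrite (map_inj_uniq inj_f) iota_uniq => /(_ isT).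
by rewrite size_map size_iota ltnn.
Qed.

Lemma exists_transition (Q : nat -> Prop) J : Q 0 -> ~ Q J -> exists j, Q j /\ ~ Q j.+1.
Proof.
move=> Q0; elim: J => [|J IH] QJ; first by [].
by case: (pselect (Q J)) => [|nQJ]; [exists J | apply: IH].
Qed.

Definition fat_from (A : nodeset) (m : nat) : Prop :=
  forall n, m <= n -> exists s t : node, A s /\ A t /\ val_at s n false /\ val_at t n true.

Lemma fat_fromP A m n b : fat_from A m -> m <= n -> exists w, A w /\ val_at w n b.
Proof. by move=> fatA /fatA [x [y [Ax [Ay [vx vy]]]]]; case: b; [exists y | exists x]. Qed.

Lemma splitting_tree_perfect T : splitting_tree T -> perfect_tree T.
Proof.
move=> [Ttree Tfat]; split=> // s Ts; have [m fatT] := Tfat s Ts.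
have le_sn : size s <= maxn m (size s) by rewrite leq_maxr.
have [t [u [[Tt cmp_t] [[Tu cmp_u] [vt vu]]]]] := fatT _ (leq_maxl m (size s)).
exists t, u; do 5?split => //.
- exact: val_at_comparable_prefix cmp_t le_sn vt.
- exact: val_at_comparable_prefix cmp_u le_sn vu.
- by apply/negP => tu; have [_] := val_at_prefix tu vt; case: vu => _ ->.
- by apply/negP => ut; have [_] := val_at_prefix ut vu; case: vt => _ ->.
Qed.

Lemma splitting_thresholds (T : nodeset) : (forall t, T t -> fat (subtree T t)) ->
  {thr : node -> nat & forall t, T t -> fat_from (subtree T t) (thr t)}.
Proof.
move=> Tfat; apply: (@choice _ _ (fun t m => T t -> fat_from (subtree T t) m)) => t.
by case: (pselect (T t)) => [/Tfat [m fatT] | nTt]; [exists m | exists 0].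
Qed.

Section Weight.
Variables (T : nodeset) (thr : node -> nat).
Hypothesis Ttree : is_tree T.
Hypothesis thrP : forall t, T t -> fat_from (subtree T t) (thr t).

Definition weight_of (s t : node) : seq node :=
  [seq u <- short_nodes (thr t) | `[< subtree T s u /\ ~ subtree T t u >]].

Lemma weight_of_weight : weight T weight_of.
Proof.
split; first by apply: splitting_tree_perfect; split=> // t /thrP; exists (thr t).
by move=> s t _ _ u; rewrite mem_filter => /andP[/asboolP].
Qed.

Definition hits (t s0 : node) (n : nat) (b : bool) : Prop :=
  exists u, subtree T t u /\ prefix s0 u /\ val_at u n b.

Lemma hits_from_prefix t s0 n b : T s0 -> prefix t s0 -> thr s0 <= n -> size s0 <= n ->
  hits t s0 n b.
Proof.
move=> Ts0 ts0 le_thr le_s0; have [u [[Tu cmp] vu]] := fat_fromP b (thrP Ts0) le_thr.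
have s0u := val_at_comparable_prefix cmp le_s0 vu.
by exists u; do !split => //; right; apply: prefix_trans ts0 s0u.
Qed.

Lemma hits_below_thr t s0 n b : T t -> prefix s0 t -> size s0 <= n ->
  ~ hits t s0 n b -> n < thr t.
Proof.
move=> Tt s0t le_s0 nhits; rewrite ltnNge; apply/negP => /(fat_fromP b (thrP Tt)).
move=> [w [[Tw cmp] vw]]; apply: nhits; exists w; do 2?split => //.
case: cmp => [wt | tw]; last exact: prefix_trans s0t tw.
by apply: prefix_le_prefix s0t wt _; apply: leq_trans le_s0 (ltnW vw.1).
Qed.

Lemma hits_lost_weight t t' s0 n b : T t' -> prefix s0 t' -> size s0 <= n ->
  hits t s0 n b -> ~ hits t' s0 n b ->
  exists v, v \in weight_of t t' /\ prefix s0 v /\ val_at v n b.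
Proof.
move=> Tt' s0t' le_s0 [u [[Tu cmp] [s0u vu]]] nhits'.
have [vv size_v] := val_at_take vu; set v := take n.+1 u in vv size_v *.
have vu_pre : prefix v u by apply: prefix_take.
have s0v : prefix s0 v by apply: prefix_le_prefix s0u vu_pre _; rewrite size_v ltnW.
have Tv : T v by apply: Ttree.2 vu_pre.
have cmp_v : prefix v t \/ prefix t v.
  case: cmp => [ut | tu]; first by left; apply: prefix_trans vu_pre ut.
  have [le_vt | /ltnW le_tv] := leqP (size v) (size t).
    by left; apply: prefix_le_prefix vu_pre tu le_vt.
  by right; apply: prefix_le_prefix tu vu_pre le_tv.
exists v; split; last by [].
rewrite mem_filter short_nodesP ?size_v ?(hits_below_thr Tt' s0t' le_s0 nhits') //.
by rewrite andbT; apply/asboolP; split=> // sub; apply: nhits'; exists v.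
Qed.

Lemma weight_path_hits (S : nodeset) (f : nat -> node) s0 n b :
  (forall s, S s -> T s) -> injective f -> f 0 = s0 -> (forall k, subtree S s0 (f k)) ->
  (forall k u, u \in weight_of (f k) (f k.+1) -> S u) ->
  thr s0 <= n -> size s0 <= n -> exists w, S w /\ prefix s0 w /\ val_at w n b.
Proof.
move=> ST inj_f f0 fS fweight le_thr le_s0.
have Ts0 : T s0 by rewrite -f0; apply: ST (fS 0).1.
have [J ltJ] := injective_size_unbounded inj_f n.
have [SJ cmpJ] := fS J.
have s0J : prefix s0 (f J) := comparable_prefix cmpJ (leq_trans le_s0 (ltnW ltJ)).
have [eqJ | neqJ] := eqVneq (nth false (f J) n) b; first by exists (f J).
have hits0 : hits (f 0) s0 n b by rewrite f0; apply: hits_from_prefix; rewrite ?prefix_refl.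
have nhitsJ : ~ hits (f J) s0 n b.
  move=> [u [[_ cmp] [_ [ltu vu]]]].
  by move: neqJ; rewrite -(comparable_nth false cmp ltu ltJ) vu eqxx.
have [j [hitsj nhitsj]] := exists_transition (Q := fun k => hits (f k) s0 n b) hits0 nhitsJ.
have [Sj1 [j1s0 | s0j1]] := fS j.+1.
  by case: nhitsj; apply: hits_from_prefix.
have [v [vw [s0v vv]]] := hits_lost_weight (ST _ Sj1) s0j1 le_s0 hitsj nhitsj.
by exists v; split; first exact: fweight vw.
Qed.

Lemma le_weight_of_splitting S : is_tree S -> rho_le weight_of S T -> splitting_tree S.
Proof.
move=> Stree [ST le_ST]; split=> // s Ss.
have [s0 [Ss0 [ss0 [f [inj_f [f0 [fS fweight]]]]]]] := le_ST s Ss.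
exists (maxn (thr s0) (size s0)) => n; rewrite geq_max => /andP[le_thr le_s0].
have hitsS b : exists w, subtree S s w /\ val_at w n b.
  have [w [Sw [s0w vw]]] := weight_path_hits b ST inj_f f0 fS fweight le_thr le_s0.
  by exists w; do !split => //; right; apply: prefix_trans ss0 s0w.
by have [[w0 [S0 v0]] [w1 [S1 v1]]] := (hitsS false, hitsS true); exists w0, w1.
Qed.

End Weight.

Theorem lemma4p10 :
  forall T : nodeset, SP T ->
    exists rho : node -> node -> seq node,
      weight T rho /\
      forall S : nodeset, is_tree S -> rho_le rho S T -> SP S.
Proof.
move=> T [Ttree Tfat]; have [thr thrP] := splitting_thresholds Tfat.
exists (weight_of T thr); split; first exact: weight_of_weight.
by move=> S Stree; apply: le_weight_of_splitting.
Qed.
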